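(* Let $A$ be a commutative ring and $\sigma$ a hereditary torsion theory on $A$-modules. (i) If $L\subseteq M$ is a totally $\sigma$-torsion submodule of an $A$-module $M$, then $M$ is totally $\sigma$-simple if and only if $M/L$ is totally $\sigma$-simple. (ii) If $M\subseteq M'$ are $A$-modules and there exists $\mathfrak{h}_0\in\mathcal{L}(\sigma)$ with $M'\mathfrak{h}_0\subseteq M$, then $M$ is totally $\sigma$-simple if and only if $M'$ is totally $\sigma$-simple.
   Context: $\mathcal{L}(\sigma)$ is the Gabriel filter of $\sigma$. A module $X$ is totally $\sigma$-torsion if $X\mathfrak{k}=0$ for some $\mathfrak{k}\in\mathcal{L}(\sigma)$. An $A$-module $M$ is totally $\sigma$-simple if $M$ is not totally $\sigma$-torsion and there exists $\mathfrak{h}\in\mathcal{L}(\sigma)$ such that $M\mathfrak{h}\subseteq H$ for every submodule $H\subseteq M$ that is not totally $\sigma$-torsion. *)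

From HB Require Import structures.
From mathcomp Require Import all_boot all_order all_algebra.
Set Implicit Arguments. Unset Strict Implicit. Unset Printing Implicit Defensive.
Import GRing.Theory.
Local Open Scope ring_scope.

Definition is_ideal (A : comPzRingType) (I : {pred A}) : Prop :=
  [/\ 0 \in I,
      (forall x y, x \in I -> y \in I -> x + y \in I) &
      (forall a x, x \in I -> a * x \in I)].

Definition colon (A : comPzRingType) (I : {pred A}) (a : A) : {pred A} :=
  fun b => b * a \in I.

(* A Gabriel filter (= the Gabriel filter L(sigma) of a hereditary torsion
   theory sigma on A-modules), given as a family of ideals of A. *)
Definition gabriel_filter (A : comPzRingType) (F : {pred A} -> Prop) : Prop :=
  [/\ (forall I, F I -> is_ideal I),
      F (fun _ => true),
      (forall I J, F I -> is_ideal J -> {subset I <= J} -> F J),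
      (forall I a, F I -> F (colon I a)) &
      (forall I J, is_ideal I -> F J ->
          (forall a, a \in J -> F (colon I a)) -> F I)].

Definition is_submod (A : comPzRingType) (V : lmodType A) (S : {pred V}) : Prop :=
  [/\ 0 \in S,
      (forall x y, x \in S -> y \in S -> x + y \in S) &
      (forall (a : A) x, x \in S -> a *: x \in S)].

(* The product X k of a submodule X and an ideal k: the set of finite sums
   of elements a *: x with a \in k and x \in X (commutative ring, so
   left/right does not matter). *)
Definition prodmod (A : comPzRingType) (V : lmodType A) (X : {pred V})
    (k : {pred A}) (v : V) : Prop :=
  exists n (a : 'I_n -> A) (x : 'I_n -> V),
    [/\ (forall i, a i \in k), (forall i, x i \in X) &
        v = \sum_(i < n) a i *: x i].

Definition totally_torsion (A : comPzRingType) (F : {pred A} -> Prop)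
    (V : lmodType A) (X : {pred V}) : Prop :=
  exists k, F k /\ (forall v, prodmod X k v -> v = 0).

(* The submodule S of V (viewed as a module) is totally sigma-simple;
   submodules of S are the submodules of V contained in S. *)
Definition totally_simple (A : comPzRingType) (F : {pred A} -> Prop)
    (V : lmodType A) (S : {pred V}) : Prop :=
  ~ totally_torsion F S /\
  exists h, F h /\
    forall H : {pred V}, is_submod H -> {subset H <= S} ->
      ~ totally_torsion F H -> (forall v, prodmod S h v -> v \in H).

From HB Require Import structures.
From mathcomp Require Import all_boot all_order all_algebra.
From mathcomp Require Import boolp.
Set Implicit Arguments.
Unset Strict Implicit.
Unset Printing Implicit Defensive.

Import GRing.Theory.
Local Open Scope ring_scope.

(* Write "X k <= Y" ([scales_into k X Y]) for: a *: x \in Y whenever a \in k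
   and x \in X.  Since X k is generated by these products, X is totally
   torsion iff X k <= 0 for some k in L(sigma), and S is totally simple iff S
   is not totally torsion and S h <= core S for some h in L(sigma), where
   [core S] is the intersection of all non totally torsion submodules of S.
   The one property of the Gabriel filter we use is that it is closed under
   products: if X h0 <= Y and Y h <= Q with Q a submodule, then X k <= Q for
   some k in L(sigma) (the transporter ideal (Q : X) contains h0 h).  Hence
   "X h0 <= Y with Y totally torsion" forces X to be totally torsion.
   (ii) M and M' are then simultaneously totally torsion, core M <= core M'
   (intersect any admissible H <= M' with M) and core M' <= core M, and
   M h0 h <= core M' transfers simplicity from M to M'.
   (i) Preimages and images along the surjection f : M -> M/L reflect total
   torsion (the latter because L is totally torsion), so cores correspond:
   f maps core M into core (M/L), and f^-1 (core (M/L)) k0 <= core M where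
   L k0 = 0; composing with the filter again transfers simplicity back. *)

Section TotallySimple.
Variables (A : comPzRingType) (F : {pred A} -> Prop).
Hypothesis hF : gabriel_filter F.

Lemma colon_ideal (I : {pred A}) (a : A) : is_ideal I -> is_ideal (colon I a).
Proof.
case=> I0 ID IM; split; rewrite /colon ?unfold_in.
- by rewrite mul0r.
- by move=> x y; rewrite !unfold_in mulrDl; exact: ID.
- by move=> b x; rewrite !unfold_in -mulrA; exact: IM.
Qed.

Lemma filter_product (I J K : {pred A}) :
  F I -> F J -> is_ideal K ->
  (forall a b, a \in I -> b \in J -> b * a \in K) -> F K.
Proof.
case: hF => _ _ Fup _ Fglue FI FJ idK IJK.
apply: (Fglue K I idK FI) => a Ia.
by apply: (Fup J) => // [|b Jb]; [exact: colon_ideal | exact: IJK].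
Qed.

Section Modules.
Variable V : lmodType A.

Definition scales_into (k : {pred A}) (X Y : {pred V}) : Prop :=
  forall a x, a \in k -> x \in X -> a *: x \in Y.

Definition transporter (X Q : {pred V}) : {pred A} :=
  fun c => `[< forall x, x \in X -> c *: x \in Q >].

Lemma transporter_ideal (X Q : {pred V}) :
  is_submod Q -> is_ideal (transporter X Q).
Proof.
case=> Q0 QD QZ; split; rewrite /transporter ?unfold_in.
- by apply/asboolP => x _; rewrite scale0r.
- move=> c d; rewrite !unfold_in => /asboolP Hc /asboolP Hd.
  by apply/asboolP => x Xx; rewrite scalerDl QD ?Hc ?Hd.
- move=> b c; rewrite !unfold_in => /asboolP Hc.
  by apply/asboolP => x Xx; rewrite -scalerA QZ ?Hc.
Qed.

Lemma scales_into_trans (h0 h : {pred A}) (X Y Q : {pred V}) :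
  F h0 -> F h -> is_submod Q ->
  scales_into h0 X Y -> scales_into h Y Q ->
  exists k, F k /\ scales_into k X Q.
Proof.
move=> Fh0 Fh subQ XY YQ; exists (transporter X Q); split.
  apply: (filter_product Fh0 Fh (transporter_ideal X subQ)) => a b ha hb.
  by apply/asboolP => x Xx; rewrite -scalerA; apply/YQ/XY.
by move=> c x /asboolP; apply.
Qed.

Lemma submod0 : is_submod (pred1 (0 : V)).
Proof.
split; first by rewrite inE.
- by move=> x y; rewrite !inE => /eqP-> /eqP->; rewrite addr0.
- by move=> a x; rewrite !inE => /eqP->; rewrite scaler0.
Qed.

Lemma submodI (H K : {pred V}) :
  is_submod H -> is_submod K -> is_submod [predI H & K].
Proof.
case=> H0 HD HZ [K0 KD KZ]; split; rewrite ?inE ?H0 ?K0 //.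
- by move=> x y; rewrite !inE => /andP[Hx Kx] /andP[Hy Ky]; rewrite HD ?KD.
- by move=> a x; rewrite !inE => /andP[Hx Kx]; rewrite HZ ?KZ.
Qed.

Lemma prodmod_gen (X : {pred V}) (k : {pred A}) a x :
  a \in k -> x \in X -> prodmod X k (a *: x).
Proof.
move=> ka Xx; exists 1%N, (fun _ => a), (fun _ => x).
by split=> //; rewrite big_ord1.
Qed.

Lemma prodmod_sub (X Q : {pred V}) (k : {pred A}) :
  is_submod Q -> scales_into k X Q -> forall v, prodmod X k v -> v \in Q.
Proof.
case=> Q0 QD _ XQ _ [n [a [x [ka Xx ->]]]].
by elim/big_ind: _ => // i _; apply: XQ.
Qed.

Lemma torsionP (X : {pred V}) :
  totally_torsion F X <-> exists k, F k /\ scales_into k X (pred1 0).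
Proof.
split=> -[k [Fk Xk]]; exists k; split=> //.
  by move=> a x ka Xx; apply/eqP/Xk/prodmod_gen.
by move=> v /(prodmod_sub submod0 Xk) /eqP.
Qed.

Lemma torsion_sub (X Y : {pred V}) :
  {subset X <= Y} -> totally_torsion F Y -> totally_torsion F X.
Proof.
move=> XY /torsionP[k [Fk Yk]]; apply/torsionP; exists k; split=> //.
by move=> a x ka /XY; apply: Yk.
Qed.

Lemma torsion_transfer (h0 : {pred A}) (X Y : {pred V}) :
  F h0 -> scales_into h0 X Y -> totally_torsion F Y -> totally_torsion F X.
Proof.
move=> Fh0 XY /torsionP[k [Fk Yk]]; apply/torsionP.
exact: scales_into_trans Fh0 Fk submod0 XY Yk.
Qed.

Definition core (S : {pred V}) : {pred V} :=
  fun v => `[< forall H : {pred V}, is_submod H -> {subset H <= S} ->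
                 ~ totally_torsion F H -> v \in H >].

Lemma coreP (S H : {pred V}) v :
  v \in core S -> is_submod H -> {subset H <= S} -> ~ totally_torsion F H ->
  v \in H.
Proof. by rewrite unfold_in => /asboolP; apply. Qed.

Lemma core_submod (S : {pred V}) : is_submod (core S).
Proof.
split; rewrite /core ?unfold_in.
- by apply/asboolP => H [H0 _ _].
- move=> x y Sx Sy; apply/asboolP => H subH HS ntH; case: (subH) => _ HD _.
  by rewrite HD ?(coreP Sx) ?(coreP Sy).
- move=> a x Sx; apply/asboolP => H subH HS ntH; case: (subH) => _ _ HZ.
  by rewrite HZ ?(coreP Sx).
Qed.

Lemma core_anti (S S' : {pred V}) :
  {subset S <= S'} -> {subset core S' <= core S}.
Proof.
move=> SS' v /coreP Sv; rewrite unfold_in; apply/asboolP => H subH HS ntH.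
by apply: Sv => // x /HS /SS'.
Qed.

Lemma simpleP (S : {pred V}) :
  totally_simple F S <->
  ~ totally_torsion F S /\ exists h, F h /\ scales_into h S (core S).
Proof.
split=> -[ntS [h [Fh Sh]]]; split=> //; exists h; split=> //.
  move=> a x ha Sx; rewrite unfold_in; apply/asboolP => H subH HS ntH.
  exact/(Sh H subH HS ntH)/prodmod_gen.
by move=> H subH HS ntH; apply: prodmod_sub => // a x ha /(Sh a x ha) /coreP; apply.
Qed.

Section Enlargement.
Variables (M M' : {pred V}) (h0 : {pred A}).
Hypotheses (subM : is_submod M) (MM' : {subset M <= M'}) (Fh0 : F h0)
           (M'M : scales_into h0 M' M).

Lemma torsion_enlarge : totally_torsion F M <-> totally_torsion F M'.
Proof. by split; [exact: torsion_transfer Fh0 M'M | exact: torsion_sub MM']. Qed.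

(* Every admissible H <= M' meets M in an admissible submodule of M. *)
Lemma core_enlarge : {subset core M <= core M'}.
Proof.
move=> v Mv; rewrite unfold_in; apply/asboolP => H subH HM' ntH.
have subHM := submodI subH subM.
have HMM : {subset [predI H & M] <= M} by move=> x /andP[].
have ntHM : ~ totally_torsion F [predI H & M].
  move=> ttHM; apply: ntH; apply: (torsion_transfer Fh0 _ ttHM) => a x ha Hx.
  by case: subH => _ _ HZ; rewrite inE HZ ?M'M ?HM'.
by case/andP: (coreP Mv subHM HMM ntHM).
Qed.

(* Simplicity restricts along M h <= M' h <= core M' <= core M and extends
   along M' h0 h <= M h <= core M <= core M'. *)
Lemma simple_enlarge : totally_simple F M <-> totally_simple F M'.
Proof.
rewrite !simpleP torsion_enlarge; split=> -[nt [h [Fh Sh]]]; split=> //.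
  have MtoM' : scales_into h M (core M') by move=> a x ha /(Sh a x ha)/core_enlarge.
  exact: scales_into_trans Fh0 Fh (core_submod M') M'M MtoM'.
by exists h; split=> // a x ha /MM' /(Sh a x ha); apply: core_anti.
Qed.

End Enlargement.
End Modules.

(* Part (i): a surjective linear map f : M -> N with kernel L presents N as M/L. *)
Section Quotient.
Variables (M N : lmodType A) (f : {linear M -> N}) (L : {pred M}).
Hypotheses (kerf : forall x, f x = 0 <-> x \in L)
           (surjf : forall y, exists x, f x = y).

Definition image_pred (H : {pred M}) : {pred N} :=
  fun y => `[< exists2 x, x \in H & f x = y >].

Definition preim_pred (P : {pred N}) : {pred M} := fun x => f x \in P.

Lemma image_predP (H : {pred M}) x : x \in H -> f x \in image_pred H.
Proof. by move=> Hx; rewrite unfold_in; apply/asboolP; exists x. Qed.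

Lemma submod_image (H : {pred M}) : is_submod H -> is_submod (image_pred H).
Proof.
case=> H0 HD HZ; split; rewrite /image_pred ?unfold_in.
- by apply/asboolP; exists 0; rewrite ?linear0.
- move=> y z; rewrite !unfold_in => /asboolP[u Hu <-] /asboolP[w Hw <-].
  by apply/asboolP; exists (u + w); rewrite ?HD ?linearD.
- move=> a y; rewrite !unfold_in => /asboolP[u Hu <-].
  by apply/asboolP; exists (a *: u); rewrite ?HZ ?linearZ.
Qed.

Lemma submod_preim (P : {pred N}) : is_submod P -> is_submod (preim_pred P).
Proof.
case=> P0 PD PZ; split; rewrite /preim_pred ?unfold_in.
- by rewrite linear0.
- by move=> x y; rewrite !unfold_in linearD; apply: PD.
- by move=> a x; rewrite !unfold_in linearZ; apply: PZ.
Qed.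

(* By surjectivity, total torsion of a preimage descends to the image. *)
Lemma torsion_of_preim (P : {pred N}) :
  totally_torsion F (preim_pred P) -> totally_torsion F P.
Proof.
move=> /torsionP[k [Fk Pk]]; apply/torsionP; exists k; split=> // a y ka Py.
have [x fx] := surjf y; move: Py; rewrite -fx => Px.
by move: (Pk a x ka Px); rewrite !inE -linearZ => /eqP->; rewrite linear0.
Qed.

(* Since the kernel L is totally torsion, total torsion of an image lifts. *)
Lemma torsion_of_image (H : {pred M}) :
  totally_torsion F L -> totally_torsion F (image_pred H) -> totally_torsion F H.
Proof.
move=> ttL /torsionP[k [Fk Hk]]; apply: torsion_transfer Fk _ ttL => a x ka Hx.
by apply/kerf; rewrite linearZ; apply/eqP/Hk/image_predP.
Qed.

(* Every admissible H <= S has an admissible preimage, so the core of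
   f^-1 S maps into the core of S. *)
Lemma core_preim (S : {pred N}) :
  {subset core (preim_pred S) <= preim_pred (core S)}.
Proof.
move=> v Sv; rewrite unfold_in /preim_pred unfold_in.
apply/asboolP => H subH HS ntH.
apply: (coreP Sv (submod_preim subH)); last exact: contra_not (@torsion_of_preim H) ntH.
by move=> x; rewrite !unfold_in => /HS.
Qed.

(* If L k0 = 0, then f^-1 (core (f S)) k0 <= core S: an element of the
   preimage differs from an element of each admissible H by an element of L. *)
Lemma core_kernel (S : {pred M}) (k0 : {pred A}) :
  F k0 -> scales_into k0 L (pred1 0) ->
  scales_into k0 (preim_pred (core (image_pred S))) (core S).
Proof.
move=> Fk0 Lk0 b v kb fSv; rewrite unfold_in; apply/asboolP => H subH HS ntH.
have ttL : totally_torsion F L by apply/torsionP; exists k0.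
have /asboolP[u Hu fu] : f v \in image_pred H.
  apply: (coreP fSv (submod_image subH)).
    by move=> y /asboolP[x /HS Sx <-]; apply: image_predP.
  exact: contra_not (torsion_of_image ttL) ntH.
have Lvu : v - u \in L by apply/kerf; rewrite linearB fu subrr.
rewrite -(subrK u v) addrC; case: subH => _ HD HZ.
by rewrite scalerDr (eqP (Lk0 _ _ kb Lvu)) addr0 HZ.
Qed.

Lemma simple_quotient : totally_torsion F L ->
  totally_simple F (fun _ : M => true) <-> totally_simple F (fun _ : N => true).
Proof.
move=> ttL; have /torsionP[k0 [Fk0 Lk0]] := ttL.
have torsionMN :
    totally_torsion F (fun _ : M => true) <-> totally_torsion F (fun _ : N => true).
  split=> [ttM | ttN].
    by apply: torsion_of_preim; apply: torsion_sub ttM.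
  by apply: (torsion_of_image ttL); apply: torsion_sub ttN.
rewrite !simpleP torsionMN; split=> -[nt [h [Fh Sh]]]; split=> //.
  exists h; split=> // a y ha _; have [x <-] := surjf y; rewrite -linearZ.
  have /core_preim : a *: x \in core (preim_pred (fun _ => true)).
    by apply: core_anti (Sh a x ha isT).
  by rewrite unfold_in.
have Sh' : scales_into h (fun _ => true) (preim_pred (core (image_pred (fun _ => true)))).
  by move=> a x ha _; rewrite unfold_in /preim_pred linearZ; apply: core_anti (Sh _ _ ha isT).
exact: scales_into_trans Fh Fk0 (core_submod _) Sh' (core_kernel Fk0 Lk0).
Qed.

End Quotient.
End TotallySimple.

Theorem mainTheorem20 (A : comPzRingType) (F : {pred A} -> Prop) :
  gabriel_filter F ->
  (* (i): M/L is represented by any N with a surjective linear map M -> N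
     whose kernel is exactly L. *)
  (forall (M N : lmodType A) (L : {pred M}) (f : {linear M -> N}),
      is_submod L -> totally_torsion F L ->
      (forall x, f x = 0 <-> x \in L) -> (forall y, exists x, f x = y) ->
      (totally_simple F (fun _ : M => true) <->
       totally_simple F (fun _ : N => true))) /\
  (* (ii) *)
  (forall (V : lmodType A) (M M' : {pred V}),
      is_submod M -> is_submod M' -> {subset M <= M'} ->
      (exists h0, F h0 /\ (forall v, prodmod M' h0 v -> v \in M)) ->
      (totally_simple F M <-> totally_simple F M')).
Proof.
move=> hF; split.
  by move=> M N L f _ ttL kerf surjf; apply: simple_quotient kerf surjf ttL.
move=> V M M' subM _ MM' [h0 [Fh0 M'h0]].
apply: (simple_enlarge hF subM MM' Fh0) => a x ha M'x.
exact/M'h0/prodmod_gen.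
Qed.
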